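(* For every nominal $\mathrm{Perm}$-set $X$, there is an isomorphism of nominal $\mathrm{Sb}$-sets $F(X^{( * )})\cong (F X)^*$.
   Context: Atoms $\mathbb{A}$ (countably infinite); $\mathrm{Sb}$ = monoid of finitely-non-identity functions $\mathbb{A}\to\mathbb{A}$; $\mathrm{Perm}$ its group of bijections. For $M\in\{\mathrm{Sb},\mathrm{Perm}\}$, a nominal $M$-set is an $M$-set in which every element $x$ has a finite support $C$ ($m_1|_C=m_2|_C\Rightarrow m_1x=m_2x$). Elements $x,y$ are separated ($x\perp y$) if they have disjoint supports; $X\otimes Y=\{(x,y)\mid x\perp y\}$. Separated powers: $X^{(0)}=1$, $X^{(n+1)}=X^{(n)}\otimes X$; $X^{( * )}=\coprod_n X^{(n)}$ (separated words). For a nominal $\mathrm{Sb}$-set $Z$, $Z^*=\coprod_n Z^n$ (all words) with pointwise action. $F(X)=(\mathrm{Sb}\times X)/{\sim}$, $\sim$ the least equivalence containing $(m,gx)\sim(mg,x)$ ($g\in\mathrm{Perm}$) and $(m,x)\sim(m',x)$ if $m|_C=m'|_C$ for a $\mathrm{Perm}$-support $C$ of $x$; action $n\cdot[m,x]=[nm,x]$. *)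

From Stdlib Require Import ClassicalEpsilon Relation_Operators.
From mathcomp Require Import all_boot.

Set Implicit Arguments.
Unset Strict Implicit.
Unset Printing Implicit Defensive.

(* Atoms: A = nat (countably infinite). *)

Definition isSb (f : nat -> nat) : Prop :=
  exists s : seq nat, forall a, a \notin s -> f a = a.
Definition isPerm (f : nat -> nat) : Prop := isSb f /\ bijective f.

Definition Sbt := {f : nat -> nat | isSb f}.
Definition Permt := {f : nat -> nat | isPerm f}.

Lemma isSb_id : isSb id.
Proof. by exists [::]. Qed.

Lemma isSb_comp f g : isSb f -> isSb g -> isSb (f \o g).
Proof.
move=> [s Hs] [t Ht]; exists (t ++ s) => a; rewrite mem_cat negb_or => /andP[Ha Hb].
by rewrite /= Ht // Hs.
Qed.

Lemma isPerm_id : isPerm id.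
Proof. by split; [exact: isSb_id | exists id]. Qed.

Lemma isPerm_comp f g : isPerm f -> isPerm g -> isPerm (f \o g).
Proof. by move=> [Sf Bf] [Sg Bg]; split; [exact: isSb_comp | exact: bij_comp]. Qed.

Definition sid : Sbt := exist _ id isSb_id.
Definition scomp (m n : Sbt) : Sbt :=
  exist _ (proj1_sig m \o proj1_sig n) (isSb_comp (proj2_sig m) (proj2_sig n)).
Definition pid : Permt := exist _ id isPerm_id.
Definition pcomp (g h : Permt) : Permt :=
  exist _ (proj1_sig g \o proj1_sig h) (isPerm_comp (proj2_sig g) (proj2_sig h)).
Definition sb_of_perm (g : Permt) : Sbt :=
  exist _ (proj1_sig g) (proj1 (proj2_sig g)).

Record pset := PSet { pcar : Type; pact : Permt -> pcar -> pcar }.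
Record sset := SSet { scar : Type; sact : Sbt -> scar -> scar }.

Definition psupp (X : pset) (C : seq nat) (x : pcar X) : Prop :=
  forall g1 g2 : Permt, {in C, proj1_sig g1 =1 proj1_sig g2} ->
    @pact X g1 x = @pact X g2 x.
Definition ssupp (S : sset) (C : seq nat) (x : scar S) : Prop :=
  forall m1 m2 : Sbt, {in C, proj1_sig m1 =1 proj1_sig m2} ->
    @sact S m1 x = @sact S m2 x.
Arguments psupp : clear implicits.
Arguments ssupp : clear implicits.

Definition is_nominal_perm (X : pset) : Prop :=
  [/\ forall x, @pact X pid x = x,
      forall g h x, @pact X (pcomp g h) x = @pact X g (@pact X h x)
    & forall x, exists C : seq nat, psupp X C x].

Definition is_nominal_sb (S : sset) : Prop :=
  [/\ forall x, @sact S sid x = x,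
      forall m n x, @sact S (scomp m n) x = @sact S m (@sact S n x)
    & forall x, exists C : seq nat, ssupp S C x].

Definition sset_iso (A B : sset) : Prop :=
  exists f : scar A -> scar B,
    bijective f /\ forall m x, f (@sact A m x) = @sact B m (f x).

Definition separated (A B : pset) (a : pcar A) (b : pcar B) : Prop :=
  exists C D : seq nat, [/\ psupp A C a, psupp B D b & forall c, c \in C -> c \notin D].
Arguments separated : clear implicits.

Definition pwords (X : pset) : pset := PSet (fun g => map (@pact X g)).

(* separated words: X^(0) = 1, X^(n+1) = X^(n) (x) X, represented as
   flat sequences: rcons w x is separated iff w is and w is separated from x *)
Inductive sepw (X : pset) : seq (pcar X) -> Prop :=
| sepw0 : @sepw X [::]
| sepwS w x : @sepw X w -> separated (pwords X) X w x -> @sepw X (rcons w x).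
Arguments sepw : clear implicits.
Arguments sepw0 : clear implicits.

Lemma psupp_act (X : pset) :
  (forall g h x, @pact X (pcomp g h) x = @pact X g (@pact X h x)) ->
  forall g C x, psupp X C x -> psupp X (map (proj1_sig g) C) (@pact X g x).
Proof.
move=> Hc g C x H g1 g2 E; rewrite -!Hc; apply: H => c cC /=.
by apply: E; apply: map_f.
Qed.

Lemma sepw_act (X : pset) :
  (forall g h x, @pact X (pcomp g h) x = @pact X g (@pact X h x)) ->
  forall g w, sepw X w -> sepw X (map (@pact X g) w).
Proof.
move=> Hc g w; elim=> [|w' x _ IH [C [D [HC HD Hdis]]]]; first exact: sepw0.
rewrite map_rcons; apply: sepwS => //.
have Hw : forall g h w, @pact (pwords X) (pcomp g h) w = @pact (pwords X) g (@pact (pwords X) h w).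
  by move=> g1 h1 w1 /=; rewrite -map_comp; apply: eq_map => y; rewrite /= Hc.
exists (map (proj1_sig g) C), (map (proj1_sig g) D); split.
- exact: (psupp_act Hw).
- exact: psupp_act.
- move=> c /mapP[a aC ->]; apply/negP => /mapP[b bD] eab.
  have [_ Bg] := proj2_sig g.
  have e := bij_inj Bg eab; move: (Hdis a aC); by rewrite e bD.
Qed.

Definition Xstar (X : pset) (HX : is_nominal_perm X) : pset :=
  let: And3 _ Hc _ := HX in
  @PSet {w : seq (pcar X) | sepw X w}
    (fun g w => exist _ (map (@pact X g) (proj1_sig w))
                      (sepw_act Hc g (proj2_sig w))).

Definition quot (A : Type) (R : A -> A -> Prop) := {P : A -> Prop | exists a, P = R a}.
Definition cls (A : Type) (R : A -> A -> Prop) (a : A) : quot R :=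
  exist _ (R a) (ex_intro _ a erefl).
Definition repr (A : Type) (R : A -> A -> Prop) (q : quot R) : A :=
  proj1_sig (constructive_indefinite_description _ (proj2_sig q)).

Inductive Fgen (X : pset) : Sbt * pcar X -> Sbt * pcar X -> Prop :=
| Fgen_perm (m : Sbt) (g : Permt) (x : pcar X) :
    Fgen (m, @pact X g x) (scomp m (sb_of_perm g), x)
| Fgen_supp (m m' : Sbt) (x : pcar X) (C : seq nat) :
    psupp X C x -> {in C, proj1_sig m =1 proj1_sig m'} -> Fgen (m, x) (m', x).

Definition Fequiv (X : pset) := clos_refl_sym_trans _ (@Fgen X).

Definition F (X : pset) : sset :=
  @SSet (quot (@Fequiv X))
    (fun n q => let p := repr q in cls (@Fequiv X) (scomp n p.1, p.2)).

Definition swords (Z : sset) : sset := @SSet (seq (scar Z)) (fun m => map (@sact Z m)).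

(* The map [m, (x_1, ..., x_n)] |-> ([m, x_1], ..., [m, x_n]) is well defined
   and equivariant. Everything rests on an explicit description of ~:
   (m, x) ~ (m', x') iff x' = g x for a permutation g with m = m' o g on a
   support of x. Its transitivity needs supports to be closed under
   intersection, which holds because there are infinitely many atoms to rename
   into. For injectivity, separation makes the permutations witnessing the
   individual letters act on disjoint supports with disjoint images, so they
   glue into a single one. For surjectivity, the support of each new letter is
   renamed to fresh atoms, on which the substitution can be redefined. *)

From Stdlib Require Import ClassicalEpsilon ProofIrrelevance.
From Stdlib Require Import FunctionalExtensionality PropExtensionality.
From Stdlib Require Import Relation_Definitions Relation_Operators Operators_Properties.
From mathcomp Require Import all_boot.

Set Implicit Arguments.
Unset Strict Implicit.
Unset Printing Implicit Defensive.

Lemma sval_inj (T : Type) (P : T -> Prop) : injective (@sval T P).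
Proof. by move=> u v; apply: eq_sig_hprop => x p1 p2; apply: proof_irrelevance. Qed.

Definition fresh (A : seq nat) (i : nat) : nat := (\max_(a <- A) a).+1 + i.

Lemma fresh_notin A i : fresh A i \notin A.
Proof.
apply/negP => /(@leq_bigmax_seq _ A xpredT id) /(_ isT).
by rewrite /fresh addSn ltnNge leq_addr.
Qed.

Lemma fresh_inj A : injective (fresh A).
Proof. exact: addnI. Qed.

Definition transp (x y a : nat) : nat :=
  if a == x then y else if a == y then x else a.

Lemma transpK x y : involutive (transp x y).
Proof.
move=> a; rewrite /transp.
case: (eqVneq a x) => [->|ax]; first by rewrite eqxx; case: eqVneq.
case: (eqVneq a y) => [->|ay]; first by rewrite eqxx.
by rewrite (negbTE ax) (negbTE ay).
Qed.

Lemma isPerm_transp x y : isPerm (transp x y).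
Proof.
split; last by exists (transp x y); apply: transpK.
exists [:: x; y] => a; rewrite !inE negb_or => /andP[ax ay].
by rewrite /transp (negbTE ax) (negbTE ay).
Qed.

Lemma exists_perm_inv (g : Permt) :
  exists gi : Permt, cancel (sval g) (sval gi) /\ cancel (sval gi) (sval g).
Proof.
case: g => f [[s Hs] [fi fK fiK]].
have Sfi : isSb fi by exists s => a Ha; have := fK a; rewrite Hs.
by exists (exist _ fi (conj Sfi (Bijective fiK fK))).
Qed.

Lemma exists_perm_ext (T : seq nat) (f : nat -> nat) :
  {in T &, injective f} -> exists g : Permt, {in T, sval g =1 f}.
Proof.
elim: T => [|t T IH] f_inj; first by exists pid.
have [g Hg] : exists g : Permt, {in T, sval g =1 f}.
  by apply: IH => a b aT bT; apply: f_inj; rewrite inE ?aT ?bT orbT.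
have [tT | tT] := boolP (t \in T).
  by exists g => a; rewrite inE => /predU1P[->|]; apply: Hg.
(* The transposition of [g t] and [f t] fixes every [g a = f a] with [a \in T]. *)
exists (pcomp (exist _ _ (isPerm_transp (sval g t) (f t))) g).
move=> a; rewrite inE /transp => /predU1P[->|aT] /=; first by rewrite eqxx.
have [gi [gK _]] := exists_perm_inv g.
case: eqP => [/(can_inj gK) eat | _]; first by rewrite -eat aT in tT.
rewrite Hg //; case: eqP => // /f_inj eat.
by rewrite -eat ?inE ?aT ?eqxx ?orbT // in tT.
Qed.

Lemma exists_perm_glue (C D : seq nat) (g h : Permt) :
  (forall c, c \in C -> c \notin D) ->
  (forall c d, c \in C -> d \in D -> sval g c != sval h d) ->
  exists k : Permt, {in C, sval k =1 sval g} /\ {in D, sval k =1 sval h}.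
Proof.
move=> CD gh.
have [gi [gK _]] := exists_perm_inv g; have [hi [hK _]] := exists_perm_inv h.
have [k Hk] : exists k : Permt,
    {in C ++ D, sval k =1 fun a => if a \in C then sval g a else sval h a}.
  apply: exists_perm_ext => a b; rewrite !mem_cat.
  case: (boolP (a \in C)) => aC; case: (boolP (b \in C)) => bC //= aD bD e.
  - exact: (can_inj gK e).
  - by have := gh a b aC bD; rewrite e eqxx.
  - by have := gh b a bC aD; rewrite e eqxx.
  - exact: (can_inj hK e).
exists k; split=> a aX; rewrite Hk ?mem_cat ?aX ?orbT //.
by case: ifP => // aC; rewrite (negbTE (CD a aC)) in aX.
Qed.

Lemma exists_perm_fresh (C D A : seq nat) : exists p : Permt,
  {in D, sval p =1 id} /\ {in C, forall c, c \notin D -> sval p c \notin A}.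
Proof.
pose f a := if a \in D then a else fresh (A ++ D) (index a C).
have [p Hp] : exists p : Permt, {in D ++ C, sval p =1 f}.
  apply: exists_perm_ext => a b; rewrite !mem_cat /f.
  case: (boolP (a \in D)) => aD; case: (boolP (b \in D)) => bD //= aC bC e.
  - by move: (fresh_notin (A ++ D) (index b C)); rewrite -e mem_cat aD orbT.
  - by move: (fresh_notin (A ++ D) (index a C)); rewrite e mem_cat bD orbT.
  - by rewrite -(nth_index 0 aC) (fresh_inj e) nth_index.
exists p; split=> [d dD | c cC cD]; rewrite Hp ?mem_cat ?dD ?cC ?orbT // /f.
  by rewrite dD.
rewrite (negbTE cD); apply: contra (fresh_notin (A ++ D) (index c C)).
by rewrite mem_cat => ->.
Qed.

Lemma isSb_patch (f k : nat -> nat) (L : seq nat) :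
  isSb f -> isSb (fun b => if b \in L then k b else f b).
Proof.
case=> s Hs; exists (L ++ s) => b; rewrite mem_cat negb_or => /andP[bL bs].
by rewrite (negbTE bL) Hs.
Qed.

Lemma psupp_sub (Y : pset) C D y : psupp Y C y -> {subset C <= D} -> psupp Y D y.
Proof. by move=> HC CD g1 g2 E; apply: HC => a aC; apply/E/CD. Qed.

Section Quotient.
Variables (A : Type) (R : relation A).
Hypothesis R_equiv : equivalence A R.

Lemma cls_eqP a b : cls R a = cls R b <-> R a b.
Proof.
have [Rrefl Rtrans Rsym] := R_equiv.
split=> [/(f_equal sval) /= -> | Rab]; first exact: Rrefl.
apply: sval_inj; apply: functional_extensionality => c.
apply: propositional_extensionality.
by split; apply: Rtrans => //; apply: Rsym.
Qed.

Lemma cls_repr q : cls R (repr q) = q.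
Proof.
case: q => P pf; rewrite /repr /=; case: constructive_indefinite_description => a /= Pa.
by apply: sval_inj; rewrite /= Pa.
Qed.

Lemma repr_cls a : R a (repr (cls R a)).
Proof. by apply/cls_eqP; rewrite cls_repr. Qed.

End Quotient.

Lemma Fequiv_equiv (Y : pset) : equivalence _ (@Fequiv Y).
Proof. exact: clos_rst_is_equiv. Qed.

Section NominalPerm.
Variable Y : pset.
Hypothesis HY : is_nominal_perm Y.
Local Notation act := (@pact Y).
Local Notation FR := (@Fequiv Y).

Lemma pact_id y : act pid y = y.
Proof. by case: HY. Qed.

Lemma pactM g h y : act (pcomp g h) y = act g (act h y).
Proof. by case: HY. Qed.

Lemma psupp_exists y : exists C, psupp Y C y.
Proof. by case: HY. Qed.

Lemma pact_ext g1 g2 y : sval g1 =1 sval g2 -> act g1 y = act g2 y.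
Proof. by move=> E; have [C HC] := psupp_exists y; apply: HC => a _; apply: E. Qed.

Lemma pactK g gi : cancel (sval g) (sval gi) -> cancel (act g) (act gi).
Proof. by move=> K y; rewrite -pactM -{2}(pact_id y); apply: pact_ext => a /=. Qed.

Lemma psupp_fix C y g : psupp Y C y -> {in C, sval g =1 id} -> act g y = y.
Proof. by move=> HC E; rewrite -{2}(pact_id y); apply: HC. Qed.

(* The atoms of [C] outside [D] are first renamed away by a permutation fixing
   [D], hence [y]; on the resulting support [g] can be replaced by a
   permutation fixing it. *)
Lemma psupp_fix_inter C D y g : psupp Y C y -> psupp Y D y ->
  {in C, forall c, c \in D -> sval g c = c} -> act g y = y.
Proof.
move=> HC HD Hg.
have [p [pD pC]] := exists_perm_fresh C D (C ++ map (sval g) C).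
have HpC : psupp Y (map (sval p) C) y.
  by rewrite -(psupp_fix HD pD); apply: psupp_act pactM _ _ _ HC.
pose C' := [seq sval p c | c <- C & c \notin D].
have C'P b : b \in C' -> b \notin C ++ map (sval g) C.
  by case/mapP=> c; rewrite mem_filter => /andP[cD cC] ->; apply: pC.
have [h [hC hC']] : exists h : Permt, {in C, sval h =1 sval g} /\ {in C', sval h =1 id}.
  apply: (@exists_perm_glue C C' g pid) => [c cC | c b cC bC'].
    by apply/negP => /C'P; rewrite mem_cat cC.
  by apply: contraTneq (C'P b bC') => /= <-; rewrite negbK mem_cat map_f ?orbT.
rewrite -(HC h) => [|c cC]; last by rewrite hC.
apply: psupp_fix HpC _ => _ /mapP[c cC ->].
have [cD | cD] := boolP (c \in D); first by rewrite pD //= hC // Hg.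
by rewrite hC' // map_f // mem_filter cD.
Qed.

Lemma psupp_inter C D y : psupp Y C y -> psupp Y D y ->
  psupp Y [seq c <- C | c \in D] y.
Proof.
move=> HC HD g1 g2 E; have [g2i [K1 K2]] := exists_perm_inv g2.
have -> : act g1 y = act g2 (act (pcomp g2i g1) y) by rewrite pactM (pactK K2).
rewrite (psupp_fix_inter HC HD) // => c cC cD /=.
by rewrite E ?mem_filter ?cC ?cD.
Qed.

Definition Frel_by (g : Permt) (C : seq nat) (p q : Sbt * pcar Y) : Prop :=
  [/\ psupp Y C p.2, q.2 = act g p.2
    & {in C, forall c, sval p.1 c = sval q.1 (sval g c)}].

Definition Frel (p q : Sbt * pcar Y) : Prop := exists g C, Frel_by g C p q.

Lemma Frel_by_restrict g C p q A A' : Frel_by g C p q ->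
  psupp Y A p.2 -> psupp Y A' q.2 -> exists C1,
  [/\ Frel_by g C1 p q, {subset C1 <= A} & {in C1, forall c, sval g c \in A'}].
Proof.
case: p q => [m y] [m' y'] [/= HC -> Hm] HA HA'.
have [gi [K1 K2]] := exists_perm_inv g.
have HgiA' : psupp Y (map (sval gi) A') y.
  by rewrite -(pactK K1 y); apply: psupp_act pactM _ _ _ HA'.
exists [seq c <- C | (c \in A) && (sval g c \in A')]; split.
- split=> //=; last by move=> c; rewrite mem_filter => /andP[_]; apply: Hm.
  apply: psupp_sub (psupp_inter (psupp_inter HC HA) HgiA') _ => c.
  by rewrite !mem_filter => /andP[/mapP[a aA' ->] /andP[-> ->]]; rewrite K2 aA'.
- by move=> c; rewrite mem_filter => /andP[/andP[]].
- by move=> c; rewrite mem_filter => /andP[/andP[]].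
Qed.

Lemma Frel_refl p : Frel p p.
Proof.
have [C HC] := psupp_exists p.2.
by exists pid, C; split; rewrite ?pact_id.
Qed.

Lemma Frel_sym p q : Frel p q -> Frel q p.
Proof.
case: p q => [m x] [m' y] [g [C [/= HC -> Hm]]]; have [gi [K1 K2]] := exists_perm_inv g.
exists gi, (map (sval g) C); split.
- exact: psupp_act pactM _ _ _ HC.
- by rewrite pactK.
- by move=> _ /mapP[c cC ->]; rewrite K1 Hm.
Qed.

Lemma Frel_trans p q r : Frel p q -> Frel q r -> Frel p r.
Proof.
case=> g [C [HC Hq Hpq]] [h [D [HD Hr Hqr]]].
have [gi [K1 K2]] := exists_perm_inv g.
exists (pcomp h g), [seq c <- C | c \in map (sval gi) D]; split.
- apply: psupp_inter => //.
  by rewrite -(pactK K1 p.2) -Hq; apply: psupp_act pactM _ _ _ HD.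
- by rewrite Hr Hq pactM.
- move=> c; rewrite mem_filter => /andP[/mapP[d dD ->] cC].
  by rewrite /= Hpq // K2 Hqr.
Qed.

Lemma Fgen_Frel p q : Fgen p q -> Frel p q.
Proof.
case: p q / => [m g x | m m' x C HC E].
- apply: Frel_sym; have [C HC] := psupp_exists x.
  by exists g, C; split.
- by exists pid, C; split; rewrite ?pact_id.
Qed.

Lemma FequivP p q : FR p q <-> Frel p q.
Proof.
split.
  elim=> {p q} [p q pq | p | p q _ pq | p q r _ pq _ qr].
  - exact: Fgen_Frel.
  - exact: Frel_refl.
  - exact: Frel_sym.
  - exact: Frel_trans pq qr.
case: p q => [m x] [m' y] [g [C [HC /= -> E]]].
apply: (@rst_trans _ _ _ (scomp m' (sb_of_perm g), x)).
  by apply/rst_step/(Fgen_supp HC) => c cC /=; apply: E.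
exact/rst_sym/rst_step/Fgen_perm.
Qed.

Lemma Fequiv_ext (m m' : Sbt) x : sval m =1 sval m' -> FR (m, x) (m', x).
Proof. by move=> E; have [C HC] := psupp_exists x; apply/rst_step/(Fgen_supp HC). Qed.

Lemma Fequiv_scomp n p q : FR p q -> FR (scomp n p.1, p.2) (scomp n q.1, q.2).
Proof.
elim=> {p q} [p q [m g x | m m' x C HC E] | p | p q _ pq | p q r _ pq _ qr] /=.
- apply: (@rst_trans _ _ _ (scomp (scomp n m) (sb_of_perm g), x)).
    exact/rst_step/Fgen_perm.
  exact: Fequiv_ext.
- by apply/rst_step/(Fgen_supp HC) => a aC /=; rewrite E.
- exact: rst_refl.
- exact: rst_sym pq.
- exact: rst_trans pq qr.
Qed.

Lemma F_act_cls n p : @sact (F Y) n (cls FR p) = cls FR (scomp n p.1, p.2).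
Proof.
apply/(cls_eqP (Fequiv_equiv Y))/Fequiv_scomp/rst_sym.
exact: (repr_cls (Fequiv_equiv Y)).
Qed.

Lemma F_nominal : is_nominal_sb (F Y).
Proof.
split=> [q | m n q | q]; rewrite -(cls_repr q); case: (repr q) => k x.
- by rewrite F_act_cls; apply/(cls_eqP (Fequiv_equiv Y))/Fequiv_ext.
- by rewrite !F_act_cls; apply/(cls_eqP (Fequiv_equiv Y))/Fequiv_ext.
- have [C HC] := psupp_exists x.
  exists (map (sval k) C) => n1 n2 E; rewrite !F_act_cls.
  by apply/(cls_eqP (Fequiv_equiv Y))/rst_step/(Fgen_supp HC) => a aC /=; apply/E/map_f.
Qed.

End NominalPerm.

Lemma psupp_cons (X : pset) C x w :
  psupp (pwords X) C (x :: w) <-> psupp X C x /\ psupp (pwords X) C w.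
Proof.
split=> [H | [Hx Hw] g1 g2 E /=]; last by congr cons; [apply: Hx | apply: Hw].
by split=> g1 g2 E; have /= [] := H g1 g2 E.
Qed.

Lemma psupp_rcons (X : pset) C w x :
  psupp (pwords X) C (rcons w x) <-> psupp (pwords X) C w /\ psupp X C x.
Proof.
split=> [H | [Hw Hx] g1 g2 E /=]; last first.
  by rewrite !map_rcons; congr rcons; [apply: Hw | apply: Hx].
by split=> g1 g2 E; have /= := H g1 g2 E; rewrite !map_rcons => /rcons_inj[].
Qed.

Lemma pwords_nominal (X : pset) : is_nominal_perm X -> is_nominal_perm (pwords X).
Proof.
move=> HX; split=> [w | g h w | ] /=.
- by rewrite (eq_map (pact_id HX)) map_id.
- by rewrite -map_comp; apply: eq_map => x /=; rewrite pactM.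
elim=> [|x w [C HC]]; first by exists [::].
have [D HD] := psupp_exists HX x.
exists (D ++ C); apply/psupp_cons; split.
  by apply: psupp_sub HD _ => a; rewrite mem_cat => ->.
by apply: psupp_sub HC _ => a; rewrite mem_cat orbC => ->.
Qed.

Lemma swords_nominal (Z : sset) : is_nominal_sb Z -> is_nominal_sb (swords Z).
Proof.
case=> Zid ZM Zsupp; split=> [w | m n w | ] /=.
- by rewrite (eq_map Zid) map_id.
- by rewrite -map_comp; apply: eq_map => z; apply: ZM.
elim=> [|z w [C HC]]; first by exists [::].
have [D HD] := Zsupp z.
exists (D ++ C) => m1 m2 E /=; congr cons.
  by apply: HD => a aD; apply: E; rewrite mem_cat aD.
by apply: HC => a aC; apply: E; rewrite mem_cat aC orbT.
Qed.

Lemma sepw_rcons_inv (X : pset) w x :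
  sepw X (rcons w x) -> sepw X w /\ separated (pwords X) X w x.
Proof.
move Ewx : (rcons w x) => wx sepwx; case: sepwx Ewx => [|w' x' sw' sep'].
  by move/(f_equal size); rewrite size_rcons.
by case/rcons_inj=> -> ->.
Qed.

Section SeparatedWords.
Variable X : pset.
(* [Xstar] matches on its nominality proof, so its carrier only reduces when
   that proof is an explicit [And3] triple. *)
Hypotheses (Xid : forall x, @pact X pid x = x)
  (XM : forall g h x, @pact X (pcomp g h) x = pact g (pact h x))
  (Xsupp : forall x, exists C, psupp X C x).
Local Notation HX := (And3 Xid XM Xsupp).
Local Notation XS := (Xstar HX).
Local Notation PW := (pwords X).
Local Notation FR := (@Fequiv X).
Local Notation FR_equiv := (Fequiv_equiv X).

Lemma psupp_Xstar C (W : pcar XS) : psupp XS C W <-> psupp PW C (sval W).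
Proof.
split=> H g1 g2 E; first by have /(f_equal sval) := H g1 g2 E.
by apply: sval_inj; apply: H.
Qed.

Lemma Xstar_nominal : is_nominal_perm XS.
Proof.
have [PWid PWM PWsupp] := pwords_nominal HX.
split=> [W | g h W | W].
- by apply: sval_inj; apply: PWid.
- by apply: sval_inj; apply: PWM.
- by have [C HC] := PWsupp (sval W); exists C; apply/psupp_Xstar.
Qed.

Definition Fword (m : Sbt) (w : seq (pcar X)) : seq (scar (F X)) :=
  map (fun x => cls FR (m, x)) w.

Lemma Fword_supp C w (m m' : Sbt) : psupp PW C w ->
  {in C, sval m =1 sval m'} -> Fword m w = Fword m' w.
Proof.
elim: w => //= x w IH /psupp_cons[Hx Hw] E; rewrite IH //; congr cons.
exact/(cls_eqP FR_equiv)/rst_step/(Fgen_supp Hx).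
Qed.

Lemma Fword_perm m g w : Fword m (map (pact g) w) = Fword (scomp m (sb_of_perm g)) w.
Proof.
rewrite /Fword -map_comp; apply: eq_map => x /=.
exact/(cls_eqP FR_equiv)/rst_step/Fgen_perm.
Qed.

Definition Fword_of (q : scar (F XS)) : seq (scar (F X)) :=
  Fword (repr q).1 (sval (repr q).2).

Lemma Fword_of_cls p : Fword_of (cls (@Fequiv XS) p) = Fword p.1 (sval p.2).
Proof.
rewrite /Fword_of; move: (repr_cls (Fequiv_equiv XS) p).
move: (repr _) => p'.
elim=> {p p'} [p q [m g W | m m' W C HC E] | p | p q _ -> | p q r _ -> _ ->] //=.
- by rewrite Fword_perm.
- by apply/esym/(Fword_supp _ E)/psupp_Xstar.
Qed.

Lemma Fword_of_equivariant m q :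
  Fword_of (@sact (F XS) m q) = map (@sact (F X) m) (Fword_of q).
Proof.
rewrite -(cls_repr q) (F_act_cls Xstar_nominal) !Fword_of_cls /Fword -map_comp.
by apply: eq_map => x; symmetry; apply: (F_act_cls HX).
Qed.

(* The witnesses for the last letter and for the rest are restricted to the
   separated supports, so that they can be glued into a single permutation. *)
Lemma Fword_inj w w' (m m' : Sbt) : sepw X w -> sepw X w' ->
  Fword m w = Fword m' w' -> @Frel PW (m, w) (m', w').
Proof.
move=> sw; elim: sw w' => [|v x sv IH [A [B [HA HB AB]]]] w'.
  by case: w' => // _ _; exists pid, [::].
case/lastP: w' => [|v' x'] sv'.
  by move/(f_equal size); rewrite size_map size_rcons.
have [sv'0 [A' [B' [HA' HB' AB']]]] := sepw_rcons_inv sv'.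
rewrite /Fword !map_rcons => /rcons_inj/pair_equal_spec[Ev Ex].
have [g [C gC]] := IH _ sv'0 Ev.
have [h [D hD]] := (FequivP HX _ _).1 ((cls_eqP (Fequiv_equiv X) _ _).1 Ex).
have [C1 [[HC1 /= -> Hg] C1A gC1]] := Frel_by_restrict (pwords_nominal HX) gC HA HA'.
have [D1 [[HD1 /= -> Hh] D1B hD1]] := Frel_by_restrict HX hD HB HB'.
have [k [kC1 kD1]] : exists k : Permt,
    {in C1, sval k =1 sval g} /\ {in D1, sval k =1 sval h}.
  apply: exists_perm_glue => [c /C1A cA | c d /gC1 gcA' /hD1 hdB'].
    by apply/negP => /D1B cB; move: (AB c cA); rewrite cB.
  by apply: contraTneq (AB' _ gcA') => ->; rewrite negbK.
exists k, (C1 ++ D1); split => /=.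
- by apply/psupp_rcons; split; [apply: psupp_sub HC1 _ | apply: psupp_sub HD1 _] => c;
    rewrite mem_cat => ->; rewrite ?orbT.
- by rewrite map_rcons; congr rcons; symmetry;
    [apply: HC1 => c /kC1 | apply: HD1 => c /kD1].
- by move=> c; rewrite mem_cat => /orP[cC1 | cD1]; [rewrite kC1 ?Hg | rewrite kD1 ?Hh].
Qed.

(* The support of the new letter is renamed to fresh atoms, on which the
   substitution can then be redefined freely. *)
Lemma Fword_surj qs : exists m w, sepw X w /\ Fword m w = qs.
Proof.
elim/last_ind: qs => [|qs q [m [w [sw Ew]]]].
  by exists sid, [::]; split => //; apply: sepw0.
rewrite -(cls_repr q); case: (repr q) => a x.
have [A HA] := psupp_exists (pwords_nominal HX) w.
have [C HC] := Xsupp x.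
have [p [_ pC]] := exists_perm_fresh C [::] A.
have [pi [pK _]] := exists_perm_inv p.
pose m2 : Sbt :=
  exist _ _ (isSb_patch (sval a \o sval pi) (map (sval p) C) (proj2_sig m)).
have pCA b : b \in map (sval p) C -> b \notin A by case/mapP=> c cC ->; apply: pC.
exists m2, (rcons w (pact p x)); split.
  apply: sepwS => //; exists A, (map (sval p) C); split.
  - exact: HA.
  - exact: psupp_act XM _ _ _ HC.
  - by move=> c cA; apply: contraL cA; apply: pCA.
rewrite /Fword map_rcons; congr rcons.
  rewrite -Ew; apply: Fword_supp HA _ => b bA /=.
  by case: ifP => // /pCA; rewrite bA.
apply/(cls_eqP FR_equiv)/(@rst_trans _ _ _ (scomp m2 (sb_of_perm p), x)).
  exact/rst_step/Fgen_perm.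
by apply/rst_step/(Fgen_supp HC) => c cC /=; rewrite map_f //= pK.
Qed.

Lemma Fword_of_inj : injective Fword_of.
Proof.
move=> q1 q2; rewrite -(cls_repr q1) -(cls_repr q2) !Fword_of_cls.
case: (repr q1) => m [w sw]; case: (repr q2) => m' [w' sw'] /= /(Fword_inj sw sw').
case=> g [C [/= HC Ew' Hm]].
apply/(cls_eqP (Fequiv_equiv XS))/(FequivP Xstar_nominal).
exists g, C; split => //=; first exact/psupp_Xstar.
exact: sval_inj.
Qed.

Lemma Fword_of_surj qs : exists q, Fword_of q = qs.
Proof.
have [m [w [sw <-]]] := Fword_surj qs.
by exists (cls (@Fequiv XS) (m, exist _ w sw)); rewrite Fword_of_cls.
Qed.

End SeparatedWords.

Lemma inj_surj_bijective (A B : Type) (f : A -> B) :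
  injective f -> (forall b, exists a, f a = b) -> bijective f.
Proof.
move=> f_inj f_surj.
pose g b := sval (constructive_indefinite_description _ (f_surj b)).
have gK : cancel g f by move=> b; rewrite /g; case: constructive_indefinite_description.
by exists g => // a; apply: f_inj; rewrite gK.
Qed.

Theorem mainTheorem7 (X : pset) (HX : is_nominal_perm X) :
  [/\ is_nominal_sb (F (Xstar HX)),
      is_nominal_sb (swords (F X))
    & sset_iso (F (Xstar HX)) (swords (F X))].
Proof.
case: HX => Xid XM Xsupp; split.
- exact/F_nominal/Xstar_nominal.
- exact/swords_nominal/F_nominal.
- exists (@Fword_of X Xid XM Xsupp); split; last exact: Fword_of_equivariant.
  by apply: inj_surj_bijective; [apply: Fword_of_inj | apply: Fword_of_surj].
Qed.
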